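(* (1) If $a_t\in HKa_sK$ for some $s>0$, then $|t|\le s$. (2) Given any $\epsilon>0$, there exists $T_0=T_0(\epsilon)$ such that $$\{k\in K: a_tk\in HKA^+\text{ for some }t>T_0\}\subset K_\epsilon M.$$
   Context: $G=\mathrm{PSL}_2(\mathbb C)$, $K=\mathrm{PSU}(2)$, $a_t=\mathrm{diag}(e^{t/2},e^{-t/2})$, $A^+=\{a_t:t\ge0\}$, $M=\{\mathrm{diag}(e^{i\theta},e^{-i\theta}):\theta\in\mathbb R\}$, $H$ is the stabilizer in $G$ of the unit circle $C_0$ centered at $0$ (equivalently of its convex hull, the unit hemisphere in $\mathbb H^3$). A left-invariant metric on $G$ is fixed; $U_\epsilon$ is the $\epsilon$-ball around $e$ and $K_\epsilon=K\cap U_\epsilon$. *)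

From HB Require Import structures.
From mathcomp Require Import all_boot all_order all_algebra.
From mathcomp Require Import complex.
From mathcomp Require Import reals sequences exp trigo.
Set Implicit Arguments. Unset Strict Implicit. Unset Printing Implicit Defensive.
Import Order.TTheory GRing.Theory Num.Theory.
Local Open Scope ring_scope.

(* G = PSL_2(C) is modelled by SL_2(C): an element of PSL_2(C) is a class {g,-g}.
   All subsets of G used below (K, H, M, KaK, ...) are represented by their full
   preimages in SL_2(C), which all contain -1; hence every membership statement
   in PSL_2(C) becomes the corresponding membership statement in SL_2(C). *)

Section Defs.
Variable R : realType.
Local Notation C := R[i].
Local Notation M2 := 'M[C]_2.

Definition cabs2 (z : C) : R := (@complex.Re R z) ^+ 2 + (@complex.Im R z) ^+ 2.

Definition cconj (z : C) : C := Complex (@complex.Re R z) (- @complex.Im R z).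
Definition adjmx (g : M2) : M2 := \matrix_(i < 2, j < 2) cconj (g j i).

Definition mk2 (a b c d : C) : M2 :=
  \matrix_(i < 2, j < 2)
    if i == ord0 then (if j == ord0 then a else b) else (if j == ord0 then c else d).

Definition ent (g : M2) (i j : nat) : C := g (inord i) (inord j).

Definition SL2 (g : M2) : Prop := \det g = 1.

Definition inK (g : M2) : Prop := SL2 g /\ g *m adjmx g = 1%:M.

Definition a_ (t : R) : M2 :=
  mk2 (Complex (expR (t / 2)) 0) 0 0 (Complex (expR (- (t / 2))) 0).

Definition inM (g : M2) : Prop :=
  exists theta : R, g = mk2 (Complex (cos theta) (sin theta)) 0 0
                            (Complex (cos theta) (- sin theta)).

Definition inAplus (g : M2) : Prop := exists t : R, 0 <= t /\ g = a_ t.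

(* Moebius action on the Riemann sphere C u {oo} = option C (None = oo). *)
Definition mobius (g : M2) (w : option C) : option C :=
  let a := ent g 0 0 in let b := ent g 0 1 in
  let c := ent g 1 0 in let d := ent g 1 1 in
  match w with
  | Some z => if c * z + d == 0 then None else Some ((a * z + b) / (c * z + d))
  | None => if c == 0 then None else Some (a / c)
  end.

Definition onC0 (w : option C) : Prop :=
  exists z : C, w = Some z /\ cabs2 z = 1.

Definition inH (g : M2) : Prop :=
  SL2 g /\
  (forall w, onC0 w -> onC0 (mobius g w)) /\
  (forall w', onC0 w' -> exists w, onC0 w /\ mobius g w = w').

Definition near (delta : R) (g h : M2) : Prop :=
  forall i j : 'I_2, cabs2 (g i j - h i j) < delta ^+ 2.

(* d is (the lift to SL_2(C) of) a left-invariant metric on PSL_2(C)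
   inducing the usual (Lie group) topology. *)
Definition left_inv_metric (d : M2 -> M2 -> R) : Prop :=
  (forall g h, SL2 g -> SL2 h -> 0 <= d g h) /\
  (forall g h, SL2 g -> SL2 h -> d g h = d h g) /\
  (forall g h k, SL2 g -> SL2 h -> SL2 k -> d g k <= d g h + d h k) /\
  (forall g h, SL2 g -> SL2 h -> (d g h = 0 <-> (g = h \/ g = - h))) /\
  (forall x g h, SL2 x -> SL2 g -> SL2 h -> d (x *m g) (x *m h) = d g h) /\
  (* compatibility with the topology at the identity (hence everywhere, by
     left-invariance): metric balls about e and matrix neighbourhoods of {1,-1}
     are mutually cofinal *)
  (forall eps, 0 < eps -> exists delta, 0 < delta /\
     forall g, SL2 g -> near delta g 1%:M -> d g 1%:M < eps) /\
  (forall delta, 0 < delta -> exists eps, 0 < eps /\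
     forall g, SL2 g -> d g 1%:M < eps -> near delta g 1%:M \/ near delta g (- 1%:M)).

End Defs.

From HB Require Import structures.
From mathcomp Require Import all_boot all_order all_algebra.
From mathcomp Require Import complex.
From mathcomp Require Import reals sequences exp trigo.
From mathcomp Require Import ring lra.
Set Implicit Arguments. Unset Strict Implicit. Unset Printing Implicit Defensive.
Import Order.TTheory GRing.Theory Num.Theory.
Local Open Scope ring_scope.
Local Open Scope complex_scope.

(* Let [J = diag(1, -1)], so that [v^* J v = |v_1|^2 - |v_2|^2] vanishes exactly on the
   lines of the points of C_0. Elements of H preserve this form up to a sign, elements of
   K preserve the standard one, and [a_s] rescales its diagonal by [e^s] and [e^-s].
   Comparing the pulled-back forms [X^* J X] of both sides of [a_t = h k1 a_s k2], their
   traces give [sinh t = y sinh s] with [|y| <= 1], whence [|t| <= s]. If instead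
   [a_t k = h k' a_u], their (2,2) entries give [e^t |k_12|^2 <= 2]; so for large [t] the
   entry [k_12] is small and [k] is a diagonal phase in M times an element of K close to
   the identity. *)

Section SL2C.
Variable R : realType.
Local Notation C := R[i].
Local Notation M2 := 'M[C]_2.
Local Notation i0 := (ord0 : 'I_2).
Local Notation i1 := (ord_max : 'I_2).
Local Notation mk2 := (@mk2 R).
Local Notation adjmx := (@adjmx R).
Local Notation cabs2 := (@cabs2 R).

Lemma cconjE (z : C) : cconj z = z^*.
Proof. by case: z. Qed.

Lemma cabs2_ge0 (z : C) : 0 <= cabs2 z.
Proof. by rewrite addr_ge0 ?sqr_ge0. Qed.

Lemma cabs2M (x y : C) : cabs2 (x * y) = cabs2 x * cabs2 y.
Proof. by case: x => ? ?; case: y => ? ?; rewrite /cabs2 /=; ring. Qed.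

Lemma cabs2N (z : C) : cabs2 (- z) = cabs2 z.
Proof. by case: z => ? ?; rewrite /cabs2 /= !sqrrN. Qed.

Lemma cabs2_conj (z : C) : cabs2 (z^*) = cabs2 z.
Proof. by case: z => ? ?; rewrite /cabs2 /= sqrrN. Qed.

Lemma cabs2_real (x : R) : cabs2 x%:C = x ^+ 2.
Proof. by rewrite /cabs2 /= expr0n addr0. Qed.

Lemma ord2_cases (i : 'I_2) : i = i0 \/ i = i1.
Proof. by case: i => [[|[|//]] ?]; [left|right]; apply: val_inj. Qed.

Lemma mk2E a b c d : (mk2 a b c d i0 i0 = a) * (mk2 a b c d i0 i1 = b)
  * (mk2 a b c d i1 i0 = c) * (mk2 a b c d i1 i1 = d).
Proof. by rewrite !mxE. Qed.

Lemma mk2_eta (A : M2) : A = mk2 (A i0 i0) (A i0 i1) (A i1 i0) (A i1 i1).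
Proof.
by apply/matrixP => i j; rewrite !mxE; case: (ord2_cases i) => ->; case: (ord2_cases j) => ->.
Qed.

Lemma mk2_inj a b c d a' b' c' d' : mk2 a b c d = mk2 a' b' c' d' ->
  [/\ a = a', b = b', c = c' & d = d'].
Proof. by move/(congr1 (fun A : M2 => (A i0 i0, A i0 i1, A i1 i0, A i1 i1))); rewrite /= !mk2E => -[]. Qed.

Lemma mulmx2 a b c d a' b' c' d' : mk2 a b c d *m mk2 a' b' c' d' =
  mk2 (a * a' + b * c') (a * b' + b * d') (c * a' + d * c') (c * b' + d * d').
Proof. by rewrite [LHS]mk2_eta; congr mk2; rewrite mxE !big_ord_recr big_ord0 /= add0r !mxE. Qed.

Lemma scale_mk2 x a b c d : x *: mk2 a b c d = mk2 (x * a) (x * b) (x * c) (x * d).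
Proof. by rewrite [LHS]mk2_eta !mxE. Qed.

Lemma det2 a b c d : \det (mk2 a b c d) = a * d - b * c.
Proof.
rewrite (expand_det_row _ ord0) !big_ord_recr big_ord0 /= add0r /cofactor !det_mx11 !mxE /=.
by rewrite ?expr0 ?expr1 /= mul1r mulN1r mulrN.
Qed.

Lemma mxtrace2 (A : M2) : \tr A = A i0 i0 + A i1 i1.
Proof. by rewrite /mxtrace !big_ord_recr big_ord0 /= add0r; congr (A _ _ + _); apply: val_inj. Qed.

Lemma mx1_2 : 1%:M = mk2 1 0 0 1.
Proof. by rewrite [LHS]mk2_eta !mxE. Qed.

Lemma adjmxE (A : M2) : adjmx A = (map_mx conjc A)^T.
Proof. by apply/matrixP => i j; rewrite !mxE cconjE. Qed.

Lemma adjmx2 a b c d : adjmx (mk2 a b c d) = mk2 a^* c^* b^* d^*.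
Proof. by rewrite [LHS]mk2_eta !mxE !cconjE. Qed.

Lemma adjmxM (A B : M2) : adjmx (A *m B) = adjmx B *m adjmx A.
Proof. by rewrite !adjmxE map_mxM trmx_mul. Qed.

Lemma adjmxK (A : M2) : adjmx (adjmx A) = A.
Proof. by apply/matrixP => i j; rewrite !mxE !cconjE conjcK. Qed.

Lemma det_adjmx (A : M2) : \det (adjmx A) = (\det A)^*.
Proof. by rewrite adjmxE det_tr det_map_mx. Qed.

Lemma mulcJ_cabs2 (z : C) : z * z^* = (cabs2 z)%:C.
Proof. by case: z => a b; rewrite /cabs2 /=; congr Complex; ring. Qed.

Lemma inK_unitary (k : M2) : inK k -> adjmx k *m k = 1%:M.
Proof. by case=> _ /mulmx1C. Qed.

Lemma inK_form (k : M2) : inK k ->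
  exists a b : C, k = mk2 a b (- b^*) a^* /\ cabs2 a + cabs2 b = 1.
Proof.
case; rewrite /SL2 (mk2_eta k) det2 adjmx2 mulmx2 mx1_2.
move: (k i0 i0) (k i0 i1) (k i1 i0) (k i1 i1) => a b c d det1 /mk2_inj [row0 _ row10 _].
(* each correction term is a combination of [det1], [row0] and [row10] *)
have -> : d = a^*.
  have -> : d = a^* + (a^* * (a * d - b * c - 1) + b * (c * a^* + d * b^*)
    - d * (a * a^* + b * b^* - 1)) by ring.
  by rewrite det1 row0 row10; ring.
have -> : c = - b^*.
  have -> : c = - b^* - (c * (a * a^* + b * b^* - 1) - a * (c * a^* + d * b^*)
    + b^* * (a * d - b * c - 1)) by ring.
  by rewrite det1 row0 row10; ring.
exists a, b; split=> //.
by move: row0; rewrite !mulcJ_cabs2 -rmorphD /= => /complexI.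
Qed.

Lemma inKM (k k' : M2) : inK k -> inK k' -> inK (k *m k').
Proof.
case=> detk unitk [detk' unitk']; split; first by rewrite /SL2 det_mulmx detk detk' mulr1.
by rewrite adjmxM mulmxA -(mulmxA k) unitk' mulmx1 unitk.
Qed.

Lemma inK_adjmx (k : M2) : inK k -> inK (adjmx k).
Proof.
move=> Hk; split; last by rewrite adjmxK inK_unitary.
by rewrite /SL2 det_adjmx Hk.1 rmorph1.
Qed.

Lemma cabs2_cossin (th : R) : cabs2 (Complex (cos th) (sin th)) = 1.
Proof. exact: cos2Dsin2. Qed.

Lemma cossin_mulJ (th : R) : Complex (cos th) (sin th) * (Complex (cos th) (sin th))^* = 1.
Proof. by rewrite mulcJ_cabs2 cabs2_cossin. Qed.

Lemma inM_inK (m : M2) : inM m -> inK m.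
Proof.
case=> th ->; set u := Complex (cos th) (sin th).
rewrite -[Complex _ (- _)]/(u^*).
split; first by rewrite /SL2 det2 mulr0 subr0 cossin_mulJ.
by rewrite adjmx2 mulmx2 mx1_2 rmorph0 !(mulr0, mul0r, addr0, add0r) conjcK [u^* * _]mulrC cossin_mulJ.
Qed.

Lemma unit_circle_angle (x y : R) : x ^+ 2 + y ^+ 2 = 1 ->
  exists th : R, cos th = x /\ sin th = y.
Proof.
move=> xy1.
have x1 : -1 <= x <= 1 by apply/andP; split; nra.
have x1' : x \in `[-1, 1] by rewrite in_itv.
have sinE : sin (acos x) = `|y| by rewrite sin_acos // -sqrtr_sqr; congr Num.sqrt; lra.
have [y0|y0] := lerP 0 y.
  by exists (acos x); rewrite acosK // sinE ger0_norm.
by exists (- acos x); rewrite cosN sinN acosK // sinE ltr0_norm // opprK.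
Qed.

Lemma inK_decomp_near_M (k : M2) (delta : R) : inK k -> cabs2 (k i0 i1) < 1 ->
  cabs2 (k i0 i1) < delta ^+ 2 ->
  exists k1 m, inK k1 /\ near delta k1 1%:M /\ inM m /\ k = k1 *m m.
Proof.
move=> Hk; have [a [b [Ek ab]]] := inK_form Hk; subst k; rewrite mk2E => b_lt1 b_delta.
pose r : R := Num.sqrt (cabs2 a).
have ra : r ^+ 2 = cabs2 a by rewrite sqr_sqrtr ?cabs2_ge0.
have r0 : 0 < r by rewrite sqrtr_gt0; lra.
have r_near1 : (r - 1) ^+ 2 < delta ^+ 2 by have := cabs2_ge0 b; nra.
have [th Ea] : exists th, a = r%:C * Complex (cos th) (sin th).
  move: ra; clearbody r; case: a {ab Hk} => a1 a2; rewrite /cabs2 /= => ra.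
  have [|th [cth sth]] := @unit_circle_angle (a1 / r) (a2 / r).
    by rewrite !expr_div_n -mulrDl -ra divff // gt_eqF ?exprn_gt0.
  by exists th; rewrite cth sth -complexr0; simpc; rewrite ![r * _]mulrC !divfK ?gt_eqF.
set u := Complex (cos th) (sin th) in Ea.
have aJ : a^* = r%:C * u^* by rewrite Ea rmorphM; congr (_ * _); exact: conjc_real.
pose m := mk2 u 0 0 u^*.
have Mm : inM m by exists th.
have k1E : mk2 a b (- b^*) a^* *m adjmx m = mk2 r%:C (b * u) (- (b^* * u^*)) r%:C.
  rewrite adjmx2 conjcK rmorph0 mulmx2 aJ Ea !(mulr0, mul0r, addr0, add0r) mulNr.
  by rewrite -!mulrA cossin_mulJ [u^* * _]mulrC cossin_mulJ !mulr1.
exists (mk2 a b (- b^*) a^* *m adjmx m), m.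
split; [exact: inKM Hk (inK_adjmx (inM_inK Mm)) | split; [|split=> //]]; last first.
  by rewrite -mulmxA (inK_unitary (inM_inK Mm)) mulmx1.
rewrite k1E mx1_2 => i j.
case: (ord2_cases i) => ->; case: (ord2_cases j) => ->; rewrite !mk2E ?subr0;
  rewrite ?cabs2N ?cabs2M ?cabs2_conj ?cabs2_cossin ?mulr1 //; rewrite /cabs2 /=; lra.
Qed.

Definition J : M2 := mk2 1 0 0 (-1).
Definition jform (X : M2) : M2 := adjmx X *m J *m X.

Lemma jformM (A B : M2) : jform (A *m B) = adjmx B *m jform A *m B.
Proof. by rewrite /jform adjmxM !mulmxA. Qed.

Lemma jform_diag (X : M2) (j : 'I_2) : jform X j j = (cabs2 (X i0 j) - cabs2 (X i1 j))%:C.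
Proof.
rewrite /jform /J (mk2_eta X) adjmx2 !mulmx2 rmorphB /= -!mulcJ_cabs2.
by case: (ord2_cases j) => ->; rewrite !mk2E; ring.
Qed.

Lemma mxtrace_adj_conj (U A : M2) : U *m adjmx U = 1%:M -> \tr (adjmx U *m A *m U) = \tr A.
Proof. by move=> unitU; rewrite mxtrace_mulC mulmxA unitU mul1mx. Qed.

Lemma inH_circle (h : M2) (z : C) : inH h -> cabs2 z = 1 ->
  cabs2 (h i0 i0 * z + h i0 i1) = cabs2 (h i1 i0 * z + h i1 i1).
Proof.
case=> _ [onC0_h _] z1.
have [w [Ew w1]] := onC0_h (Some z) (ex_intro _ z (conj erefl z1)).
have inord0 : inord 0 = i0 by apply: val_inj; rewrite /= inordK.
have inord1 : inord 1 = i1 by apply: val_inj; rewrite /= inordK.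
move: Ew; rewrite /mobius /ent inord0 inord1; case: eqP => // /eqP den0 [Ew]; rewrite -Ew in w1.
by rewrite -[h i0 i0 * z + h i0 i1](divfK den0) cabs2M w1 mul1r.
Qed.

Lemma jform_inH (h : M2) : inH h ->
  exists l : R, l ^+ 2 = 1 /\ forall X, jform (h *m X) = l%:C *: jform X.
Proof.
move=> Hh.
have circle (x y : R) : x ^+ 2 + y ^+ 2 = 1 ->
    cabs2 (h i0 i0 * Complex x y + h i0 i1) = cabs2 (h i1 i0 * Complex x y + h i1 i1).
  by move=> xy1; apply: inH_circle.
(* the circle condition at [z = 1, -1, i, -i] makes [jform h] diagonal with opposite entries *)
have [l Jh] : exists l : R, jform h = mk2 l%:C 0 0 (- l)%:C.
  have := circle 1 0 ltac:(by rewrite expr1n expr0n addr0).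
  have := circle (-1) 0 ltac:(by rewrite sqrrN expr1n expr0n addr0).
  have := circle 0 1 ltac:(by rewrite expr1n expr0n add0r).
  have := circle 0 (-1) ltac:(by rewrite sqrrN expr1n expr0n add0r).
  rewrite /jform /J (mk2_eta h) adjmx2 !mulmx2.
  case: (h i0 i0) => a1 a2; case: (h i0 i1) => b1 b2.
  case: (h i1 i0) => c1 c2; case: (h i1 i1) => d1 d2.
  rewrite !mk2E /cabs2; simpc => /= E1 E2 E3 E4.
  exists (a1 ^+ 2 + a2 ^+ 2 - c1 ^+ 2 - c2 ^+ 2).
  by congr mk2; apply/eqP; rewrite eq_complex /=; apply/andP; split; apply/eqP; nra.
have JhJ : jform h = l%:C *: J by rewrite Jh /J scale_mk2 mulr1 mulr0 mulrN1 rmorphN.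
exists l; split=> [|X]; last by rewrite jformM JhJ -scalemxAr -scalemxAl.
have := congr1 determinant Jh.
rewrite /jform !det_mulmx det_adjmx Hh.1 rmorph1 /J !det2 -rmorphM !mul0r !subr0 mul1r mulr1.
by move=> /(congr1 (@complex.Re R)) /=; lra.
Qed.

Lemma sqr_expR_half (t : R) : expR (t / 2) ^+ 2 = expR t.
Proof. by rewrite expr2 -expRD -splitr. Qed.

Lemma jform_HKA (h k : M2) (s : R) : inH h -> inK k -> exists y : R, -1 <= y <= 1 /\
  jform (h *m k *m a_ s) i0 i0 = (y * expR s)%:C /\
  jform (h *m k *m a_ s) i1 i1 = (- (y * expR (- s)))%:C.
Proof.
move=> /jform_inH [l [l2 jform_h]] /inK_form [a [b [-> ab]]].
have a0 := cabs2_ge0 a; have b0 := cabs2_ge0 b.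
exists (l * (cabs2 a - cabs2 b)); split.
  have : (l * (cabs2 a - cabs2 b)) ^+ 2 <= 1 by rewrite exprMn l2 mul1r; nra.
  by move=> y2; apply/andP; split; nra.
rewrite -mulmxA jform_h; split; rewrite mxE jform_diag /a_ mulmx2 !mk2E !(mulr0, addr0, add0r).
all: rewrite !cabs2M ?cabs2N ?cabs2_conj !cabs2_real -?mulNr !sqr_expR_half -rmorphM; congr _%:C; ring.
Qed.

Lemma expR_subN_le (t s : R) : expR t - expR (- t) <= expR s - expR (- s) -> t <= s.
Proof.
apply: contraLR; rewrite -!ltNge => st.
by rewrite ltrD ?ltr_expR // ltrN2 ltr_expR ltrN2.
Qed.

Lemma HKAK_norm_le (t s : R) (h k1 k2 : M2) : 0 <= s -> inH h -> inK k1 -> inK k2 ->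
  a_ t = h *m k1 *m a_ s *m k2 -> `|t| <= s.
Proof.
move=> s0 Hh Hk1 Hk2 E.
have [y [y1 [E0 E1]]] := jform_HKA s Hh Hk1.
have sinhE : expR t - expR (- t) = y * (expR s - expR (- s)).
  apply: (@complexI R).
  have := congr1 (fun X => \tr (jform X)) E.
  rewrite /= [jform (_ *m k2)]jformM (mxtrace_adj_conj _ Hk2.2) !mxtrace2 E0 E1 !jform_diag /a_ !mk2E.
  by rewrite !cabs2_real -!rmorphD -[- (t / 2)]mulNr !sqr_expR_half => /complexI E2; congr _%:C; lra.
have sinh_s : 0 <= expR s - expR (- s) by rewrite subr_ge0 ler_expR; lra.
rewrite ler_norml lerNl; apply/andP; split; apply: expR_subN_le; rewrite ?opprK; nra.
Qed.

Lemma HKA_corner_bound (k h k' : M2) (t u : R) : inK k -> 0 <= t -> inH h -> inK k' ->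
  0 <= u -> a_ t *m k = h *m k' *m a_ u -> expR t * cabs2 (k i0 i1) <= 2.
Proof.
move=> Hk t0 Hh Hk' u0 E.
have [y [y1 [_ E1]]] := jform_HKA u Hh Hk'.
have [a [b [Ek ab]]] := inK_form Hk.
have := jform_diag (a_ t *m k) i1.
rewrite {1}E E1 Ek /a_ mulmx2 !mk2E !(mulr0, mul0r, addr0, add0r) !cabs2M cabs2_conj !cabs2_real.
rewrite -[- (t / 2)]mulNr !sqr_expR_half => /complexI E2.
have := cabs2_ge0 a; have := cabs2_ge0 b => b0 a0.
have et1 : expR (- t) <= 1 by rewrite expR_le1; lra.
have eu1 : expR (- u) <= 1 by rewrite expR_le1; lra.
have := expR_gt0 (- t); have := expR_gt0 (- u); nra.
Qed.

End SL2C.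

Theorem proposition4p2 (R : realType) :
  (forall t s : R, 0 < s ->
     (exists h k1 k2 : 'M[R[i]]_2, inH h /\ inK k1 /\ inK k2 /\
        a_ t = h *m k1 *m a_ s *m k2) ->
     `|t| <= s) /\
  (forall d : 'M[R[i]]_2 -> 'M[R[i]]_2 -> R, left_inv_metric d ->
   forall eps : R, 0 < eps ->
   exists T0 : R,
     forall k : 'M[R[i]]_2, inK k ->
       (exists t : R, T0 < t /\
          exists h k' b : 'M[R[i]]_2, inH h /\ inK k' /\ inAplus b /\
            a_ t *m k = h *m k' *m b) ->
       exists k1 m : 'M[R[i]]_2, inK k1 /\ d k1 1%:M < eps /\ inM m /\ k = k1 *m m).
Proof.
split=> [t s s0 [h [k1 [k2 [Hh [Hk1 [Hk2 E]]]]]] | d [_ [_ [_ [_ [_ [near_d _]]]]]] eps eps0].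
  exact: HKAK_norm_le (ltW s0) Hh Hk1 Hk2 E.
have [delta [delta0 d_small]] := near_d eps eps0.
pose eta := Num.min (delta ^+ 2) 1.
have eta0 : 0 < eta by rewrite lt_min exprn_gt0 ?ltr01.
exists (2 / eta) => k Hk [t [tT [h [k' [_ [Hh [Hk' [[u [u0 ->]] E]]]]]]]].
have t0 : 0 < t by apply: lt_trans tT; rewrite divr_gt0.
have corner := HKA_corner_bound Hk (ltW t0) Hh Hk' u0 E.
have corner_eta : cabs2 (k ord0 ord_max) < eta.
  have := expR_ge1Dx t; have := cabs2_ge0 (k ord0 ord_max).
  move: tT; rewrite ltr_pdivrMr //; nra.
move: corner_eta; rewrite lt_min => /andP [corner_delta corner_1].
have [k1 [m [Hk1 [near1 [Mm ->]]]]] := inK_decomp_near_M Hk corner_1 corner_delta.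
by exists k1, m; split=> //; split; [exact: d_small Hk1.1 near1 | split].
Qed.
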